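(* Let $M$ and $N$ be two quasianalytic weight sequences and let $(\omega^M_{j,k})_{j,k\in\mathbb N}$ be numbers as in the representation formula for $M$. Assume $\sup_{k\in\mathbb N_{>0}}n_k^{1/k}=+\infty$ (Roumieu case) resp. $\lim_{k\to+\infty}n_k^{1/k}=+\infty$ (Beurling case). Then there exist $\mathbf F=(F_j)_{j\in\mathbb N}\in\Lambda^1_{\{N\}}$ resp. $\mathbf F\in\Lambda^1_{(N)}$ and $a_0\in(0,1]$ such that $$\limsup_{k\to+\infty}\Big|\sum_{j=0}^{k-1}\omega^M_{j,k}F_ja^j\Big|=+\infty\quad\text{for all }0<a\le a_0.$$
   Context: For a sequence $M=(M_p)_{p\in\mathbb N}$ of positive reals write $m_p:=M_p/p!$ (and $n_p:=N_p/p!$). $M$ is a weight sequence if $1=M_0\le M_1$, $M_p^2\le M_{p-1}M_{p+1}$ for all $p\ge1$, and $\liminf_{p\to\infty}m_p^{1/p}>0$; it is quasianalytic if $\sum_{p\ge1}M_{p-1}/M_p=+\infty$. For $\mathbf b=(b_\alpha)_{\alpha\in\mathbb N^r}\in\mathbb C^{\mathbb N^r}$ and $h>0$ put $|\mathbf b|^N_h:=\sup_{\alpha}|b_\alpha|/(h^{|\alpha|}n_{|\alpha|})$; $\Lambda^r_{\{N\}}:=\{\mathbf b:\exists h>0,\ |\mathbf b|^N_h<\infty\}$ and $\Lambda^r_{(N)}:=\{\mathbf b:\forall h>0,\ |\mathbf b|^N_h<\infty\}$. Representation formula (Thilliez): for every quasianalytic weight sequence $M$ there exist numbers $(\omega^M_{j,k})_{j,k\in\mathbb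 N}$ such that $\lim_{k\to+\infty}\omega^M_{j,k}=1$ for every $j$, and for every germ $f$ at $0\in\mathbb R$ of a smooth function $f$ on some $(-1/k,1/k)$ satisfying: for each compact $K$ there is $h>0$ with $\sup_{j,x\in K}|f^{(j)}(x)|/(h^jM_j)<\infty$, one has $f(x)=\lim_{k}\sum_{j=0}^{k-1}\omega^M_{j,k}\frac{f^{(j)}(0)}{j!}x^j$ for all $x>0$ small enough. *)

From Stdlib Require Import Reals Lra Arith Factorial.
Open Scope R_scope.

Fixpoint sumR (g : nat -> R) (k : nat) : R :=
  match k with
  | O => 0
  | S k' => sumR g k' + g k'
  end.

Definition mseq (M : nat -> R) (p : nat) : R := M p / INR (fact p).

Definition weight_sequence (M : nat -> R) : Prop :=
  (forall p, 0 < M p) /\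
  M 0%nat = 1 /\ 1 <= M 1%nat /\
  (forall p, (1 <= p)%nat -> M p ^ 2 <= M (p - 1)%nat * M (p + 1)%nat) /\
  (* liminf_{p -> oo} m_p^{1/p} > 0 *)
  (exists c, 0 < c /\ exists P, forall p, (P <= p)%nat -> (1 <= p)%nat ->
       c <= Rpower (mseq M p) (/ INR p)).

Definition quasianalytic (M : nat -> R) : Prop :=
  cv_infty (sumR (fun q => M q / M (S q))).

(* Complex numbers as pairs (real part, imaginary part) *)
Definition Cmod (z : R * R) : R := sqrt (fst z ^ 2 + snd z ^ 2).

Definition seminorm_finite (N : nat -> R) (h : R) (b : nat -> R * R) : Prop :=
  exists C, forall j, Cmod (b j) <= C * (h ^ j * mseq N j).

Definition Lambda_Roumieu (N : nat -> R) (b : nat -> R * R) : Prop :=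
  exists h, 0 < h /\ seminorm_finite N h b.

Definition Lambda_Beurling (N : nat -> R) (b : nat -> R * R) : Prop :=
  forall h, 0 < h -> seminorm_finite N h b.

Definition smooth_with_derivs (r : R) (f : R -> R) (D : nat -> R -> R) : Prop :=
  (forall x, - r < x < r -> D 0%nat x = f x) /\
  (forall j x, - r < x < r -> derivable_pt_lim (D j) x (D (S j) x)).

Definition class_bound (M : nat -> R) (r : R) (D : nat -> R -> R) : Prop :=
  forall K : R -> Prop, compact K -> (forall x, K x -> - r < x < r) ->
    exists h, 0 < h /\ exists C, forall j x, K x -> Rabs (D j x) <= C * (h ^ j * M j).

(* The numbers omega satisfy Thilliez's representation formula for M *)
Definition representation_numbers (M : nat -> R) (omega : nat -> nat -> R) : Prop :=
  (forall j, Un_cv (fun k => omega j k) 1) /\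
  (forall (k0 : nat) (f : R -> R) (D : nat -> R -> R),
      (0 < k0)%nat ->
      smooth_with_derivs (/ INR k0) f D ->
      class_bound M (/ INR k0) D ->
      exists delta, 0 < delta /\ forall x, 0 < x < delta ->
        Un_cv (fun k => sumR (fun j => omega j k * (D j 0 / INR (fact j)) * x ^ j) k) (f x)).

Definition omega_sum (omega : nat -> nat -> R) (F : nat -> R * R) (a : R) (k : nat) : R * R :=
  (sumR (fun j => omega j k * fst (F j) * a ^ j) k,
   sumR (fun j => omega j k * snd (F j) * a ^ j) k).

Definition limsup_infty (u : nat -> R) : Prop :=
  forall B K, exists k, (K <= k)%nat /\ B < u k.

From Stdlib Require Import Reals Lra Lia ClassicalEpsilon.
Open Scope R_scope.

(* Choose indices
   j_0 < k_0 < j_1 < k_1 < ... such that n_{j_l}^{1/j_l} > (l+1)^2 and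
   omega_{i,k_l} >= 1/2 for all i <= j_l, and put F_{j_l} = n_{j_l} / (l+1)^{j_l},
   F_j = 0 otherwise.  Then |F_{j_l}| / (h^{j_l} n_{j_l}) = ((l+1) h)^{-j_l} is
   bounded for every h > 0, so F lies in the Beurling (hence Roumieu) class.  At
   k = k_l every term of the partial sum is nonnegative, and the term of index
   j_l is at least ((l+1) a)^{j_l} / 2, which is unbounded in l for any a > 0. *)

Lemma sumR_nonneg (g : nat -> R) (k : nat) :
  (forall i, (i < k)%nat -> 0 <= g i) -> 0 <= sumR g k.
Proof.
  induction k as [|k IH]; simpl; intros Hg; [lra|].
  assert (0 <= sumR g k) by (apply IH; intros; apply Hg; lia).
  assert (0 <= g k) by (apply Hg; lia).
  lra.
Qed.

Lemma sumR_ge_term (g : nat -> R) (k i : nat) :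
  (forall i, (i < k)%nat -> 0 <= g i) -> (i < k)%nat -> g i <= sumR g k.
Proof.
  induction k as [|k IH]; intros Hg Hi; [lia|]; simpl.
  assert (0 <= g k) by (apply Hg; lia).
  destruct (Nat.eq_dec i k) as [->|Hik].
  - assert (0 <= sumR g k) by (apply sumR_nonneg; intros; apply Hg; lia).
    lra.
  - assert (g i <= sumR g k) by (apply IH; [intros; apply Hg; lia | lia]).
    lra.
Qed.

Lemma Cmod_real (x : R) : Cmod (x, 0) = Rabs x.
Proof.
  unfold Cmod; simpl.
  replace (x * (x * 1) + 0 * (0 * 1)) with (Rsqr x) by (unfold Rsqr; ring).
  apply sqrt_Rsqr_abs.
Qed.

Lemma Cmod_omega_sum_real (omega : nat -> nat -> R) (F : nat -> R * R) (a : R) (k : nat) :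
  (forall j, snd (F j) = 0) ->
  Cmod (omega_sum omega F a k) = Rabs (sumR (fun j => omega j k * fst (F j) * a ^ j) k).
Proof.
  intros HF; unfold omega_sum; rewrite <- Cmod_real; do 2 f_equal.
  generalize k at 2; intros n; induction n as [|n IH]; simpl; [reflexivity|].
  rewrite IH, HF; ring.
Qed.

Lemma mseq_pos (N : nat -> R) (p : nat) : (forall q, 0 < N q) -> 0 < mseq N p.
Proof.
  intros HN; unfold mseq; apply Rdiv_lt_0_compat; [apply HN | apply INR_fact_lt_0].
Qed.

Lemma pow_le_of_lt_root (x c : R) (j : nat) :
  0 < x -> (0 < j)%nat -> 0 <= c -> c < Rpower x (/ INR j) -> c ^ j <= x.
Proof.
  intros Hx Hj Hc Hroot.
  assert (Hj' : INR j <> 0) by (apply not_0_INR; lia).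
  assert (Ex : x = Rpower x (/ INR j) ^ j).
  { rewrite <- Rpower_pow by (unfold Rpower; apply exp_pos).
    rewrite Rpower_mult.
    replace (/ INR j * INR j) with 1 by (field; exact Hj').
    now rewrite Rpower_1. }
  rewrite Ex; apply pow_incr; lra.
Qed.

Lemma pow_inv_scaled_bounded (h : R) (e : nat -> nat) :
  0 < h -> (forall l m, (l <= m)%nat -> (e l <= e m)%nat) ->
  exists C, 0 <= C /\ forall l, (/ ((INR l + 1) * h)) ^ e l <= C.
Proof.
  intros Hh He.
  destruct (archimed_cor1 h Hh) as [L [HLh HL]].
  assert (HLpos : 0 < INR L) by (apply lt_0_INR; lia).
  assert (HLh' : 1 < INR L * h).
  { apply Rmult_lt_compat_l with (r := INR L) in HLh; [|exact HLpos].
    rewrite Rinv_r in HLh; lra. }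
  assert (Hinvh : 0 < / h) by (apply Rinv_0_lt_compat; exact Hh).
  exists ((1 + / h) ^ e L); split; [apply pow_le; lra|].
  intros l.
  assert (Hl : 0 <= INR l) by apply pos_INR.
  assert (Hbase : 0 <= / ((INR l + 1) * h))
    by (apply Rlt_le, Rinv_0_lt_compat, Rmult_lt_0_compat; lra).
  destruct (Compare_dec.le_lt_dec L l) as [HLl|HlL].
  -     assert (HLl' : INR L <= INR l) by (apply le_INR; exact HLl).
    apply Rle_trans with (1 ^ e l).
    + apply pow_incr; split; [exact Hbase|].
      rewrite <- Rinv_1; apply Rinv_le_contravar; [lra | nra].
    + rewrite pow1; apply pow_R1_Rle; lra.
  - apply Rle_trans with ((1 + / h) ^ e l).
    + apply pow_incr; split; [exact Hbase|].
      apply Rle_trans with (/ h); [apply Rinv_le_contravar; nra | lra].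
    + apply Rle_pow; [lra | apply He; lia].
Qed.

Lemma unbounded_beyond (f : nat -> R) :
  (forall B, exists k, B < f k) -> forall n B, exists k, (n <= k)%nat /\ B < f k.
Proof.
  intros Hf n; induction n as [|n IH]; intros B.
  - destruct (Hf B) as [k Hk]; exists k; split; [lia | exact Hk].
  - destruct (IH (Rmax B (f n))) as [k [Hnk Hk]].
    pose proof (Rmax_l B (f n)); pose proof (Rmax_r B (f n)).
    exists k; split; [|lra].
    destruct (Nat.eq_dec k n) as [->|]; [lra | lia].
Qed.

Lemma eventually_ge_half (omega : nat -> nat -> R) :
  (forall j, Un_cv (omega j) 1) ->
  forall j, exists k, (j < k)%nat /\ forall i, (i <= j)%nat -> 1 / 2 <= omega i k.
Proof.
  intros Hom.
  assert (Hev : forall j, exists k0, forall i k, (i <= j)%nat -> (k0 <= k)%nat ->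
                  1 / 2 <= omega i k).
  { intros j; induction j as [|j [k1 Hk1]].
    - destruct (Hom 0%nat (1 / 2)) as [k2 Hk2]; [lra|].
      exists k2; intros i k Hi Hk.
      replace i with 0%nat by lia.
      specialize (Hk2 k Hk); unfold R_dist in Hk2; apply Rabs_def2 in Hk2; lra.
    - destruct (Hom (S j) (1 / 2)) as [k3 Hk3]; [lra|].
      exists (max k1 k3); intros i k Hi Hk.
      destruct (Nat.eq_dec i (S j)) as [->|].
      + specialize (Hk3 k ltac:(lia)); unfold R_dist in Hk3.
        apply Rabs_def2 in Hk3; lra.
      + apply Hk1; lia. }
  intros j; destruct (Hev j) as [k0 Hk0].
  exists (max k0 (S j)); split; [lia|].
  intros i Hi; apply Hk0; lia.
Qed.

Lemma interleaved_choice (P Q : nat -> nat -> Prop) :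
  (forall l n, exists j, (n < j)%nat /\ P l j) ->
  (forall j, exists k, (j < k)%nat /\ Q j k) ->
  exists J K : nat -> nat, forall l,
    P l (J l) /\ (J l < K l)%nat /\ Q (J l) (K l) /\ (K l < J (S l))%nat.
Proof.
  intros HP HQ.
  destruct (choice (fun (ln : nat * nat) j => (snd ln < j)%nat /\ P (fst ln) j))
    as [pickJ HpickJ].
  { intros [l n]; apply HP. }
  destruct (choice _ HQ) as [pickK HpickK].
  pose (J := fix J l := match l with
                        | O => pickJ (0, 0)%nat
                        | S l' => pickJ (l, pickK (J l'))
                        end).
  exists J, (fun l => pickK (J l)); intros l.
  assert (HJl : exists n, J l = pickJ (l, n)) by (destruct l; eexists; reflexivity).
  destruct HJl as [n HJl].
  change (J (S l)) with (pickJ (S l, pickK (J l))).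
  destruct (HpickJ (l, n)) as [_ HPl]; rewrite <- HJl in HPl.
  destruct (HpickK (J l)) as [HJK HQl].
  destruct (HpickJ (S l, pickK (J l))) as [HKJ _].
  repeat split; assumption.
Qed.

Definition lacunary (J : nat -> nat) (c : nat -> R) (j : nat) : R :=
  match excluded_middle_informative (exists l, J l = j) with
  | left H => c (proj1_sig (constructive_indefinite_description _ H))
  | right _ => 0
  end.

Lemma lacunary_cases (J : nat -> nat) (c : nat -> R) (j : nat) :
  (exists l, J l = j /\ lacunary J c j = c l) \/
  ((forall l, J l <> j) /\ lacunary J c j = 0).
Proof.
  unfold lacunary; destruct (excluded_middle_informative _) as [H|H].
  - left; destruct (constructive_indefinite_description _ H) as [l Hl].
    exists l; split; [exact Hl | reflexivity].
  - right; split; [|reflexivity].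
    intros l Hl; apply H; exists l; exact Hl.
Qed.

Lemma lacunary_at (J : nat -> nat) (c : nat -> R) (l : nat) :
  (forall l m, J l = J m -> l = m) -> lacunary J c (J l) = c l.
Proof.
  intros HJ; destruct (lacunary_cases J c (J l)) as [[m [Hm ->]] | [Hno _]].
  - now rewrite (HJ m l Hm).
  - exfalso; exact (Hno l eq_refl).
Qed.

Section Divergence.

Variables (N : nat -> R) (omega : nat -> nat -> R) (J K : nat -> nat).
Hypothesis N_pos : forall p, 0 < N p.
Hypothesis J_pos : forall l, (0 < J l)%nat.
Hypothesis J_root : forall l, (INR l + 1) ^ 2 < Rpower (mseq N (J l)) (/ INR (J l)).
Hypothesis J_lt_K : forall l, (J l < K l)%nat.
Hypothesis K_lt_J : forall l, (K l < J (S l))%nat.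
Hypothesis omega_K : forall l i, (i <= J l)%nat -> 1 / 2 <= omega i (K l).

Let coef (l : nat) : R := mseq N (J l) / (INR l + 1) ^ J l.
Let F (j : nat) : R * R := (lacunary J coef j, 0).

Lemma J_lt_mono l m : (l < m)%nat -> (J l < J m)%nat.
Proof.
  intros Hlm; induction Hlm as [|m _ IH].
  - specialize (J_lt_K l); specialize (K_lt_J l); lia.
  - specialize (J_lt_K m); specialize (K_lt_J m); lia.
Qed.

Lemma J_le_mono l m : (l <= m)%nat -> (J l <= J m)%nat.
Proof.
  intros Hlm; destruct (Nat.eq_dec l m) as [->|]; [lia|].
  apply Nat.lt_le_incl, J_lt_mono; lia.
Qed.

Lemma J_inj l m : J l = J m -> l = m.
Proof.
  intros E; destruct (Nat.lt_trichotomy l m) as [H|[H|H]]; [|exact H|];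
    apply J_lt_mono in H; lia.
Qed.

Lemma le_J l : (l <= J l)%nat.
Proof.
  induction l as [|l IH]; [lia|].
  pose proof (J_lt_mono l (S l) (Nat.lt_succ_diag_r l)); lia.
Qed.

Lemma coef_pos l : 0 < coef l.
Proof.
  apply Rdiv_lt_0_compat; [apply mseq_pos, N_pos|].
  apply pow_lt; pose proof (pos_INR l); lra.
Qed.

Lemma coef_ge l : (INR l + 1) ^ J l <= coef l.
Proof.
  set (P := (INR l + 1) ^ J l).
  assert (HP : 0 < P) by (apply pow_lt; pose proof (pos_INR l); lra).
  assert (Hsq : P * P <= mseq N (J l)).
  { unfold P; rewrite <- Rpow_mult_distr.
    apply pow_le_of_lt_root; [apply mseq_pos, N_pos | apply J_pos | |].
    - pose proof (pos_INR l); nra.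
    - replace ((INR l + 1) * (INR l + 1)) with ((INR l + 1) ^ 2) by ring.
      apply J_root. }
  unfold coef; fold P.
  apply Rmult_le_reg_r with P; [exact HP|].
  unfold Rdiv; rewrite Rmult_assoc, Rinv_l; lra.
Qed.

Lemma lacunary_in_Beurling : Lambda_Beurling N F.
Proof.
  intros h Hh.
  destruct (pow_inv_scaled_bounded h J Hh J_le_mono) as [C [HC0 HC]].
  exists C; intros j.
  assert (Hnorm : 0 <= h ^ j * mseq N j)
    by (apply Rmult_le_pos; [apply pow_le; lra | apply Rlt_le, mseq_pos, N_pos]).
  unfold F; rewrite Cmod_real.
  destruct (lacunary_cases J coef j) as [[l [<- ->]] | [_ ->]].
  - rewrite Rabs_right by (apply Rle_ge, Rlt_le, coef_pos).
    assert (E : coef l = (/ ((INR l + 1) * h)) ^ J l * (h ^ J l * mseq N (J l))).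
    { assert (Hl1 : INR l + 1 <> 0) by (pose proof (pos_INR l); lra).
      unfold coef; rewrite pow_inv, Rpow_mult_distr.
      field; repeat split; try apply pow_nonzero; lra. }
    rewrite E; apply Rmult_le_compat_r; [exact Hnorm | apply HC].
  - rewrite Rabs_R0; apply Rmult_le_pos; assumption.
Qed.

Lemma omega_sum_ge_term a l :
  0 < a ->
  omega (J l) (K l) * coef l * a ^ J l <=
  sumR (fun j => omega j (K l) * fst (F j) * a ^ j) (K l).
Proof.
  intros Ha.
  replace (coef l) with (fst (F (J l))) by (apply lacunary_at, J_inj).
  apply (sumR_ge_term (fun j => omega j (K l) * fst (F j) * a ^ j));
    [|apply J_lt_K].
  intros i Hi; unfold F; simpl.
  destruct (lacunary_cases J coef i) as [[m [<- ->]] | [_ ->]]; [|lra].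
  (* J m < K l < J (S l) forces m <= l, so omega is at least 1/2 there *)
  assert (Hml : (m <= l)%nat).
  { destruct (Compare_dec.le_lt_dec m l) as [|Hlm]; [assumption|].
    pose proof (J_le_mono (S l) m Hlm); specialize (K_lt_J l); lia. }
  pose proof (omega_K l (J m) (J_le_mono m l Hml)).
  pose proof (coef_pos m); pose proof (pow_lt a (J m) Ha).
  apply Rmult_le_pos; [apply Rmult_le_pos|]; lra.
Qed.

Lemma term_ge a l :
  0 < a ->
  1 / 2 * ((INR l + 1) * a) ^ J l <= omega (J l) (K l) * coef l * a ^ J l.
Proof.
  intros Ha.
  pose proof (omega_K l (J l) (Nat.le_refl _)) as Hw.
  pose proof (pow_lt a (J l) Ha) as Hpa.
  pose proof (coef_ge l) as Hc.
  pose proof (pow_lt (INR l + 1) (J l) ltac:(pose proof (pos_INR l); lra)).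
  rewrite Rpow_mult_distr.
  assert (1 / 2 * coef l <= omega (J l) (K l) * coef l)
    by (apply Rmult_le_compat_r; [apply Rlt_le, coef_pos | exact Hw]).
  nra.
Qed.

Lemma lacunary_sum_unbounded a :
  0 < a -> limsup_infty (fun k => Cmod (omega_sum omega F a k)).
Proof.
  intros Ha B n.
  destruct (INR_unbounded (Rmax (INR n) (Rmax (/ a) (2 * B / a)))) as [l0 Hl0].
  pose proof (Rmax_l (INR n) (Rmax (/ a) (2 * B / a))).
  pose proof (Rmax_r (INR n) (Rmax (/ a) (2 * B / a))).
  pose proof (Rmax_l (/ a) (2 * B / a)); pose proof (Rmax_r (/ a) (2 * B / a)).
  assert (Hn : (n < l0)%nat) by (apply INR_lt; lra).
  assert (Hla : 1 <= (INR l0 + 1) * a).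
  { assert (/ a * a = 1) by (field; lra). nra. }
  assert (HlB : B < 1 / 2 * ((INR l0 + 1) * a)).
  { assert (2 * B / a * a = 2 * B) by (field; lra). nra. }
  exists (K l0); split; [pose proof (le_J l0); pose proof (J_lt_K l0); lia|].
  rewrite Cmod_omega_sum_real by reflexivity.
  eapply Rlt_le_trans; [|apply Rle_abs].
  eapply Rlt_le_trans; [exact HlB|].
  eapply Rle_trans; [|apply (omega_sum_ge_term a l0 Ha)].
  eapply Rle_trans; [|apply (term_ge a l0 Ha)].
  apply Rmult_le_compat_l; [lra|].
  rewrite <- pow_1 at 1; apply Rle_pow; [exact Hla | apply J_pos].
Qed.

End Divergence.

Lemma exists_Beurling_divergent_omega_sum (N : nat -> R) (omega : nat -> nat -> R) :
  (forall p, 0 < N p) -> (forall j, Un_cv (omega j) 1) ->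
  (forall c n, exists j, (n < j)%nat /\ c < Rpower (mseq N j) (/ INR j)) ->
  exists F, Lambda_Beurling N F /\
    forall a, 0 < a -> limsup_infty (fun k => Cmod (omega_sum omega F a k)).
Proof.
  intros HN Hom Hroot.
  destruct (interleaved_choice
              (fun l j => (0 < j)%nat /\ (INR l + 1) ^ 2 < Rpower (mseq N j) (/ INR j))
              (fun j k => forall i, (i <= j)%nat -> 1 / 2 <= omega i k))
    as [J [K HJK]].
  - intros l n; destruct (Hroot ((INR l + 1) ^ 2) n) as [j [Hnj Hj]].
    exists j; repeat split; [lia | lia | exact Hj].
  - exact (eventually_ge_half omega Hom).
  - eexists; split.
    + apply (lacunary_in_Beurling N J K HN); intros l; apply HJK.
    + apply (lacunary_sum_unbounded N omega J K HN); intros l; apply HJK.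
Qed.

Lemma Lambda_Beurling_Roumieu (N : nat -> R) (F : nat -> R * R) :
  Lambda_Beurling N F -> Lambda_Roumieu N F.
Proof.
  intros HF; exists 1; split; [lra | apply HF; lra].
Qed.

Theorem mainTheorem2 (M N : nat -> R) (omega : nat -> nat -> R) :
  weight_sequence M -> quasianalytic M ->
  weight_sequence N -> quasianalytic N ->
  representation_numbers M omega ->
  (* Roumieu case *)
  ((forall B, exists k, (0 < k)%nat /\ B < Rpower (mseq N k) (/ INR k)) ->
   exists F : nat -> R * R, Lambda_Roumieu N F /\
     exists a0, 0 < a0 <= 1 /\
       forall a, 0 < a <= a0 -> limsup_infty (fun k => Cmod (omega_sum omega F a k)))
  /\
  (* Beurling case *)
  ((forall B, exists K, forall k, (K <= k)%nat -> (0 < k)%nat ->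
        B < Rpower (mseq N k) (/ INR k)) ->
   exists F : nat -> R * R, Lambda_Beurling N F /\
     exists a0, 0 < a0 <= 1 /\
       forall a, 0 < a <= a0 -> limsup_infty (fun k => Cmod (omega_sum omega F a k))).
Proof.
  intros _ _ [HN _] _ [Hom _].
  assert (Hsum : (forall c n, exists j, (n < j)%nat /\ c < Rpower (mseq N j) (/ INR j)) ->
            exists F, Lambda_Beurling N F /\ exists a0, 0 < a0 <= 1 /\
              forall a, 0 < a <= a0 -> limsup_infty (fun k => Cmod (omega_sum omega F a k))).
  { intros Hroot.
    destruct (exists_Beurling_divergent_omega_sum N omega HN Hom Hroot) as [F [HF Hdiv]].
    exists F; split; [exact HF|].
    exists 1; split; [lra|]; intros a [Ha _]; exact (Hdiv a Ha). }
  split; intros Hroot.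
  - assert (Hunb : forall B, exists k, B < Rpower (mseq N k) (/ INR k))
      by (intros B; destruct (Hroot B) as [k [_ Hk]]; exists k; exact Hk).
    destruct Hsum as [F [HF Ha0]].
    + intros c n; destruct (unbounded_beyond _ Hunb (S n) c) as [j [Hj Hc]].
      exists j; split; [lia | exact Hc].
    + exists F; split; [apply Lambda_Beurling_Roumieu, HF | exact Ha0].
  - apply Hsum; intros c n; destruct (Hroot c) as [k0 Hk0].
    exists (max k0 (S n)); split; [lia | apply Hk0; lia].
Qed.
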